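(* Let $n\ge 0$, $k\ge1$ be integers. Let $\mathcal A$ be any (deterministic) algorithm that, given oracle access to an arbitrary feasibility function $f:\{0,\dots,n\}^k\to\{\mathbf{true},\mathbf{false}\}$, terminates and outputs exactly the set $P$ of Pareto points of $f$. Then for every feasibility function $f$, the run of $\mathcal A$ on $f$ evaluates $f$ at every co-Pareto point of $f$ (the co-Pareto front induced by $P$).
   Context: For $\vec x,\vec x'\in\{0,\dots,n\}^k$, $\vec x\le_k\vec x'$ iff $x_i\le x'_i$ for all $i$; $\vec x$ is smaller than $\vec x'$ (and $\vec x'$ greater than $\vec x$) if $\vec x\le_k\vec x'$ and $\vec x\neq\vec x'$. A feasibility function is a monotone $f:\{0,\dots,n\}^k\to\{\mathbf{true},\mathbf{false}\}$: if $f(\vec x)=\mathbf{true}$ then $f(\vec x')=\mathbf{true}$ for all $\vec x'$ greater than $\vec x$. A Pareto point of $f$ is an $\vec x$ with $f(\vec x)=\mathbf{true}$ and $f(\vec x')=\mathbf{false}$ for all $\vec x'$ smaller than $\vec x$. A co-Pareto point of $f$ is an $\vec x$ with $f(\vec x)=\mathbf{false}$ and $f(\vec x')=\mathbf{true}$ for all $\vec x'$ greater than $\vec x$. The algorithm accesses $f$ only through queries returning $f(\vec x)$ for chosen points $\vec x$. *)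

From mathcomp Require Import all_boot.
Set Implicit Arguments. Unset Strict Implicit. Unset Printing Implicit Defensive.

Definition point (n k : nat) := {ffun 'I_k -> 'I_n.+1}.

Definition le_k n k (x x' : point n k) : bool := [forall i, (x i <= x' i)%N].
Definition smaller n k (x x' : point n k) : bool := le_k x x' && (x != x').

Definition feasible n k (f : point n k -> bool) : Prop :=
  forall x x', f x -> smaller x x' -> f x'.

Definition pareto n k (f : point n k -> bool) (x : point n k) : bool :=
  f x && [forall x', smaller x' x ==> ~~ f x'].

Definition co_pareto n k (f : point n k -> bool) (x : point n k) : bool :=
  ~~ f x && [forall x', smaller x x' ==> f x'].

Definition pareto_set n k (f : point n k -> bool) : {set point n k} :=
  [set x | pareto f x].

(* A deterministic oracle algorithm: given the history of queries and
   answers so far, it either queries a new point (inl x) or halts with an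
   output set (inr P). *)
Definition algorithm n k := seq (point n k * bool) -> point n k + {set point n k}.

Fixpoint exec n k (A : algorithm n k) (f : point n k -> bool) (fuel : nat)
  (h : seq (point n k * bool)) : option (seq (point n k * bool) * {set point n k}) :=
  match fuel with
  | 0 => None
  | m.+1 => match A h with
            | inr P => Some (h, P)
            | inl x => exec A f m (rcons h (x, f x))
            end
  end.

Definition computes_pareto n k (A : algorithm n k) : Prop :=
  forall f : point n k -> bool, feasible f ->
    exists fuel h P, exec A f fuel [::] = Some (h, P) /\ P = pareto_set f.

From mathcomp Require Import all_boot.

Set Implicit Arguments.
Unset Strict Implicit.
Unset Printing Implicit Defensive.

(* If the run on f never queried a co-Pareto point x, then it runs identically
   on the oracle g that also accepts x.  But g is again a feasibility function,
   and x is a Pareto point of g while it is not one of f, so the common output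
   cannot be both Pareto sets. *)

Section Runs.

Variables (n k : nat) (A : algorithm n k).

Lemma exec_history_subset f fuel h0 h P :
  exec A f fuel h0 = Some (h, P) -> {subset h0 <= h}.
Proof.
elim: fuel h0 => [|m IH] h0 //=.
case: (A h0) => [y|Q]; last by case=> <- _.
move=> /IH sub_h z z_h0; apply: sub_h.
by rewrite mem_rcons inE z_h0 orbT.
Qed.

Lemma exec_oracle_agree f g fuel h0 h P :
  exec A f fuel h0 = Some (h, P) ->
  {in [seq q.1 | q <- h], f =1 g} ->
  exec A g fuel h0 = Some (h, P).
Proof.
elim: fuel h0 => [|m IH] h0 //=.
case: (A h0) => [y|Q] // run_f fg.
have y_queried : y \in [seq q.1 | q <- h].
  apply/mapP; exists (y, f y) => //.
  by apply: (exec_history_subset run_f); rewrite mem_rcons mem_head.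
by rewrite -(fg y y_queried); apply: IH.
Qed.

Lemma exec_deterministic f fuel fuel' h0 r r' :
  exec A f fuel h0 = Some r -> exec A f fuel' h0 = Some r' -> r = r'.
Proof.
elim: fuel fuel' h0 => [|m IH] [|m'] h0 //=.
case: (A h0) => [y|Q]; first exact: IH.
by move=> [<-] [<-].
Qed.

Lemma computes_pareto_output f fuel h P :
  computes_pareto A -> feasible f ->
  exec A f fuel [::] = Some (h, P) -> P = pareto_set f.
Proof.
move=> A_pareto f_feas run_f.
have [fuel' [h' [P' [run_f' <-]]]] := A_pareto f f_feas.
by case: (exec_deterministic run_f run_f').
Qed.

End Runs.

Section CoPareto.

Variables (n k : nat) (f : point n k -> bool) (x : point n k).
Hypotheses (f_feas : feasible f) (x_co : co_pareto f x).

Definition accept_also (y : point n k) : bool := (y == x) || f y.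

Lemma smaller_co_pareto_infeasible y : smaller y x -> ~~ f y.
Proof.
move=> yx; apply/negP => fy.
by case/andP: x_co => /negP[]; apply: f_feas fy yx.
Qed.

Lemma feasible_accept_also : feasible accept_also.
Proof.
move=> y z /orP[/eqP -> | fy] yz; rewrite /accept_also.
  by case/andP: x_co => _ /forallP/(_ z)/implyP/(_ yz) ->; rewrite orbT.
by rewrite (f_feas fy yz) orbT.
Qed.

Lemma pareto_accept_also : pareto accept_also x.
Proof.
rewrite /pareto /accept_also eqxx /=; apply/forallP => y; apply/implyP => yx.
rewrite negb_or smaller_co_pareto_infeasible // andbT.
by apply: contraTneq yx => ->; rewrite /smaller eqxx andbF.
Qed.

Lemma co_pareto_not_pareto : ~~ pareto f x.
Proof. by case/andP: x_co => fxF _; rewrite /pareto (negbTE fxF). Qed.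

End CoPareto.

Theorem lemma6 (n k : nat) (hk : (1 <= k)%N) (A : algorithm n k) :
  computes_pareto A ->
  forall f : point n k -> bool, feasible f ->
  forall fuel h P, exec A f fuel [::] = Some (h, P) ->
  forall x : point n k, co_pareto f x -> x \in [seq q.1 | q <- h].
Proof.
move=> A_pareto f f_feas fuel h P run_f x x_co.
apply: contraT => x_unqueried.
pose g := accept_also f x.
have g_feas : feasible g by apply: feasible_accept_also.
have run_g : exec A g fuel [::] = Some (h, P).
  apply: exec_oracle_agree run_f _ => y y_queried.
  by rewrite /g /accept_also; case: eqP => // yx; rewrite -yx y_queried in x_unqueried.
have Pf := computes_pareto_output A_pareto f_feas run_f.
have Pg := computes_pareto_output A_pareto g_feas run_g.
have : x \in pareto_set g by rewrite inE; apply: pareto_accept_also.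
by rewrite -Pg Pf inE (negbTE (co_pareto_not_pareto x_co)).
Qed.
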